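(* Let $U\ge 0$ be a random variable with distribution function $F(z)=P(U\le z)$, and for $p\in[0,1)$ let $\xi_p=\inf\{z\ge 0: F(z)\ge p\}$ denote its $p$-th quantile. Let $w:[0,1]\to[0,1]$ be continuous, nondecreasing, with $w(0)=0$, $w(1)=1$, and Hölder continuous of order $\alpha\in(0,1]$ with constant $H>0$, and suppose there is $\gamma\le\alpha$ with $\int_0^\infty P(U>z)^{\gamma}\,dz<\infty$. Then $$\lim_{n\to\infty}\sum_{i=0}^{n-1}\xi_{i/n}\Big(w\big(\tfrac{n-i}{n}\big)-w\big(\tfrac{n-i-1}{n}\big)\Big)=\int_0^\infty w\big(P(U>z)\big)\,dz<\infty .$$
   Context: A function $f:[0,1]\to\mathbb{R}$ is Hölder continuous of order $\alpha\in(0,1]$ with constant $H>0$ if $|f(x)-f(y)|\le H|x-y|^{\alpha}$ for all $x,y\in[0,1]$. (In the paper this is applied with $U=u^+(X)$, $w=w^+$ and with $U=u^-(X)$, $w=w^-$.) *)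

From Stdlib Require Import Reals Lra.
Open Scope R_scope.

(* x^y for x >= 0, y > 0, with the convention 0^y = 0 (Stdlib's Rpower 0 y = 1). *)
Definition rpow (x y : R) : R := if Rle_dec x 0 then 0 else Rpower x y.

Definition improper_integral_0_infty (f : R -> R) (l : R) : Prop :=
  exists I : R -> R,
    (forall b, 0 <= b -> exists pr : Riemann_integrable f 0 b, RiemannInt pr = I b) /\
    (forall eps, 0 < eps -> exists M, forall b, M <= b -> Rabs (I b - l) < eps).

Definition nonneg_distribution_function (F : R -> R) : Prop :=
  (forall x y, x <= y -> F x <= F y) /\
  (forall x eps, 0 < eps -> exists d, 0 < d /\ forall y, x <= y < x + d -> Rabs (F y - F x) < eps) /\
  (forall z, z < 0 -> F z = 0) /\
  (forall eps, 0 < eps -> exists M, forall z, M <= z -> Rabs (F z - 1) < eps).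

Definition is_glb (E : R -> Prop) (m : R) : Prop :=
  (forall x, E x -> m <= x) /\ (forall b, (forall x, E x -> b <= x) -> b <= m).

Definition holder_01 (w : R -> R) (alpha H : R) : Prop :=
  forall x y, 0 <= x <= 1 -> 0 <= y <= 1 -> Rabs (w x - w y) <= H * rpow (Rabs (x - y)) alpha.

Definition quantile_sum (xi w : R -> R) (n : nat) : R :=
  sum_f_R0 (fun i => xi (INR i / INR n) *
     (w (INR (n - i) / INR n) - w (INR (n - i - 1) / INR n))) (n - 1).

(* Write N = n + 1, x_k = xi (k/N) and v_k = w (1 - k/N).  By Abel summation the
   quantile sum is the integral over [0, x_n] of the staircase equal to v_(k+1) on
   (x_k, x_(k+1)); there w (1 - F) lies between v_(k+1) and v_k, and the Hoelder bound
   gives v_k - v_(k+1) <= H N^-alpha, so the sum misses the integral of w (1 - F) over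
   [0, x_n] by at most H N^-alpha x_n.  Beyond x_n we have 1 - F <= 1/N, hence
   w (1 - F) <= H N^-alpha, while everywhere w (1 - F) <= H (1 - F)^gamma; so the rest of
   the integral is at most H N^-alpha M plus H times the tail beyond M of the integral of
   (1 - F)^gamma.  The same tail controls N^-alpha x_n, because (1 - F)^gamma >= N^-gamma
   on (x_n/2, x_n).  Letting N and then M go to infinity gives the limit. *)

From Stdlib Require Import Reals ZArith Lra Lia Classical.
From Coquelicot Require Import Coquelicot.
Open Scope R_scope.

Lemma adapted_couple_const (u : R -> R) (x y c : R) : x <= y ->
  (forall t, x < t < y -> u t = c) ->
  adapted_couple u x y (cons x (cons y nil)) (cons c nil).
Proof.
  intros Hxy Hc; unfold adapted_couple; repeat split.
  - intros [|i] Hi; [exact Hxy|simpl in Hi; lia].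
  - simpl; unfold Rmin; destruct (Rle_dec x y); lra.
  - simpl; unfold Rmax; destruct (Rle_dec x y); lra.
  - intros [|i] Hi t Ht; [apply Hc, Ht|simpl in Hi; lia].
Qed.

Definition IsStepFun_const (u : R -> R) (x y c : R) (Hxy : x <= y)
  (Hc : forall t, x < t < y -> u t = c) : IsStepFun u x y :=
  existT _ (cons x (cons y nil)) (existT _ (cons c nil) (adapted_couple_const u x y c Hxy Hc)).

Lemma RiemannInt_SF_const (u : R -> R) (x y c : R) Hxy Hc :
  RiemannInt_SF (mkStepFun (IsStepFun_const u x y c Hxy Hc)) = c * (y - x).
Proof.
  unfold RiemannInt_SF; simpl. destruct (Rle_dec x y); [|lra].
  unfold subdivision_val, subdivision; simpl. ring.
Qed.

Fixpoint grid_sum (c : nat -> R) (h : R) (N : nat) : R :=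
  match N with O => 0 | S n => grid_sum c h n + c n * h end.

Section Grid.
Variables (u : R -> R) (c : nat -> R) (a h : R).
Hypothesis h_gt0 : 0 < h.
Hypothesis u_cell : forall k t, a + INR k * h < t < a + INR (S k) * h -> u t = c k.

Lemma grid_le k : a + INR k * h <= a + INR (S k) * h.
Proof. rewrite S_INR; nra. Qed.

Definition IsStepFun_grid : forall N, IsStepFun u a (a + INR N * h).
Proof.
  induction N as [|N IH].
  - simpl. replace (a + 0 * h) with a by ring.
    apply (IsStepFun_const u a a 0 (Rle_refl a)). intros; lra.
  - apply StepFun_P46 with (a + INR N * h); [exact IH|].
    exact (IsStepFun_const u _ _ (c N) (grid_le N) (u_cell N)).
Defined.

Lemma RiemannInt_SF_grid N (pr : IsStepFun u a (a + INR N * h)) :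
  RiemannInt_SF (mkStepFun pr) = grid_sum c h N.
Proof.
  induction N as [|N IH] in pr |- *.
  - simpl grid_sum. revert pr. replace (a + INR 0 * h) with a by (simpl; ring). intro pr.
    pose proof (StepFun_P43 pr pr pr). lra.
  - cbn [grid_sum].
    rewrite <- (StepFun_P43 (IsStepFun_grid N)
                  (IsStepFun_const u _ _ (c N) (grid_le N) (u_cell N)) pr).
    rewrite IH, RiemannInt_SF_const, S_INR. ring.
Qed.
End Grid.

(* [phi t] and [phi t - psi t] are the values of f at the grid points around t. *)
Lemma nonincreasing_step_approx (f : R -> R) (a h b : R) (N : nat) :
  (forall x y, x <= y -> f y <= f x) -> 0 < h -> a + INR N * h = b ->
  {phi : StepFun a b & {psi : StepFun a b |
    (forall t, a <= t <= b -> Rabs (f t - phi t) <= psi t) /\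
    RiemannInt_SF psi = (f a - f b) * h}}.
Proof.
  intros f_mono h_gt0 <-.
  set (j := fun t => IZR (Int_part ((t - a) / h))).
  assert (j_cell : forall k t, a + INR k * h < t < a + INR (S k) * h -> j t = INR k).
  { intros k t Ht. unfold j.
    rewrite <- (Int_part_spec _ (Z.of_nat k)); [now rewrite <- INR_IZR_INZ|].
    rewrite <- INR_IZR_INZ, S_INR in *.
    assert (E : (t - a) / h * h = t - a) by (field; lra).
    split; nra. }
  set (phi := fun t => f (a + j t * h)).
  set (psi := fun t => f (a + j t * h) - f (a + (j t + 1) * h)).
  assert (phi_cell : forall k t, a + INR k * h < t < a + INR (S k) * h ->
     phi t = f (a + INR k * h)).
  { intros k t Ht. unfold phi. now rewrite (j_cell k t Ht). }
  assert (psi_cell : forall k t, a + INR k * h < t < a + INR (S k) * h ->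
     psi t = f (a + INR k * h) - f (a + INR (S k) * h)).
  { intros k t Ht. unfold psi. now rewrite (j_cell k t Ht), S_INR. }
  exists (mkStepFun (IsStepFun_grid phi _ a h h_gt0 phi_cell N)).
  exists (mkStepFun (IsStepFun_grid psi _ a h h_gt0 psi_cell N)).
  split.
  - intros t _. simpl. unfold phi, psi.
    destruct (base_Int_part ((t - a) / h)) as [B1 B2]. fold (j t) in B1, B2.
    assert (E : (t - a) / h * h = t - a) by (field; lra).
    assert (L1 : a + j t * h <= t) by nra.
    assert (L2 : t <= a + (j t + 1) * h) by nra.
    pose proof (f_mono _ _ L1). pose proof (f_mono _ _ L2).
    rewrite Rabs_left1; lra.
  - simpl. rewrite (RiemannInt_SF_grid _ _ _ _ h_gt0 psi_cell). clear.
    induction N as [|N IH]; cbn [grid_sum].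
    + replace (a + INR 0 * h) with a by (simpl; ring). ring.
    + rewrite IH, S_INR. ring.
Qed.

Lemma Riemann_integrable_nonincreasing (f : R -> R) (a b : R) :
  (forall x y, x <= y -> f y <= f x) -> a <= b -> Riemann_integrable f a b.
Proof.
  intros f_mono Hab. destruct (Req_EM_T a b) as [<-|Hne]; [apply RiemannInt_P7|].
  assert (Hlt : a < b) by lra. clear Hab Hne. intro eps.
  pose proof (f_mono a b (Rlt_le _ _ Hlt)) as fab. pose proof (cond_pos eps).
  set (D := (f a - f b + 1) * (b - a)).
  assert (D_gt0 : 0 < D) by (unfold D; nra).
  assert (Dratio : 0 < D / eps) by (apply Rdiv_lt_0_compat; lra).
  set (N := Z.to_nat (up (D / eps))).
  assert (HN : D / eps < INR N).
  { destruct (archimed (D / eps)) as [Hup _]. unfold N.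
    rewrite INR_IZR_INZ, Z2Nat.id; [lra|]. apply le_IZR; lra. }
  assert (N_pos : 0 < INR N) by lra.
  set (h := (b - a) / INR N).
  assert (h_gt0 : 0 < h) by (apply Rdiv_lt_0_compat; lra).
  assert (Hb : a + INR N * h = b) by (unfold h; field; lra).
  destruct (nonincreasing_step_approx f a h b N f_mono h_gt0 Hb) as [phi [psi [Happrox Hint]]].
  exists phi, psi. split.
  - intros t. rewrite Rmin_left, Rmax_right by lra. apply Happrox.
  - rewrite Hint, Rabs_right by (apply Rle_ge, Rmult_le_pos; lra).
    assert (E : (f a - f b) * h <= D / INR N).
    { unfold D, h. apply Rmult_le_reg_r with (INR N); [lra|]. field_simplify; nra. }
    apply Rle_lt_trans with (1 := E).
    apply Rmult_lt_reg_r with (INR N / eps); [apply Rdiv_lt_0_compat; lra|].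
    replace (D / INR N * (INR N / eps)) with (D / eps) by (field; lra).
    replace (eps * (INR N / eps)) with (INR N) by (field; lra). exact HN.
Qed.

Lemma rpow_ge0 (x y : R) : 0 <= rpow x y.
Proof. unfold rpow; destruct (Rle_dec x 0); [lra|]. left; apply exp_pos. Qed.

Lemma rpow_Rpower (x y : R) : 0 < x -> rpow x y = Rpower x y.
Proof. intros; unfold rpow; destruct (Rle_dec x 0); [lra|auto]. Qed.

Lemma rpow_le_base (x y a : R) : 0 <= x <= y -> 0 <= a -> rpow x a <= rpow y a.
Proof.
  intros Hxy Ha. unfold rpow; destruct (Rle_dec x 0), (Rle_dec y 0); try lra.
  - left; apply exp_pos.
  - apply Rle_Rpower_l; lra.
Qed.

Lemma rpow_le_exponent (x a b : R) : 0 <= x <= 1 -> b <= a -> rpow x a <= rpow x b.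
Proof.
  intros Hx Hab. unfold rpow; destruct (Rle_dec x 0); [lra|].
  assert (ln_x : ln x <= 0).
  { destruct (Rle_lt_or_eq_dec x 1 (proj2 Hx)) as [Hx1| ->]; [|now rewrite ln_1].
    rewrite <- ln_1. left; apply ln_increasing; lra. }
  unfold Rpower. destruct (Rle_lt_or_eq_dec (a * ln x) (b * ln x)) as [Hlt| ->]; [nra| |lra].
  left; now apply exp_increasing.
Qed.

Lemma rpow_inv_INR_cv0 (a : R) : 0 < a -> Un_cv (fun n => rpow (/ INR (S n)) a) 0.
Proof.
  intros Ha eps Heps.
  destruct (archimed_cor1 (Rpower eps (/ a))) as [N0 [HN0 N0_pos]]; [apply exp_pos|].
  exists N0. intros n Hn. unfold R_dist.
  assert (HSn : 0 < INR (S n)) by (apply lt_0_INR; lia).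
  assert (Hle : / INR (S n) <= / INR N0)
    by (apply Rinv_le_contravar; [apply lt_0_INR; lia|apply le_INR; lia]).
  rewrite Rminus_0_r, Rabs_right by apply Rle_ge, rpow_ge0.
  rewrite rpow_Rpower by (apply Rinv_0_lt_compat; lra).
  rewrite <- (Rpower_1 eps Heps), <- (Rinv_l a) by lra. rewrite <- Rpower_mult.
  apply Rlt_Rpower_l; [lra|]. split; [apply Rinv_0_lt_compat|]; lra.
Qed.

Section Quantile.
Variables (F xi : R -> R).
Hypothesis hF : nonneg_distribution_function F.
Hypothesis hxi : forall p, 0 <= p < 1 -> is_glb (fun z => 0 <= z /\ F z >= p) (xi p).

Lemma distribution_range (z : R) : 0 <= F z <= 1.
Proof.
  destruct hF as [F_mono [_ [F_neg F_lim]]]. split.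
  - destruct (Rlt_le_dec z 0); [rewrite F_neg; lra|].
    rewrite <- (F_neg (-1)) by lra. apply F_mono; lra.
  - destruct (Rle_lt_dec (F z) 1) as [|Hz]; auto.
    destruct (F_lim (F z - 1)) as [M HM]; [lra|].
    specialize (HM (Rmax M z) (Rmax_l _ _)).
    pose proof (F_mono z (Rmax M z) (Rmax_r _ _)).
    rewrite Rabs_right in HM; lra.
Qed.

(* Right continuity of F makes the infimum defining the quantile a minimum. *)
Lemma quantile_spec (p : R) : 0 <= p < 1 -> 0 <= xi p /\ p <= F (xi p).
Proof.
  intros Hp. destruct hF as [_ [F_rc _]]. destruct (hxi p Hp) as [xi_lb xi_glb].
  assert (xi_ge0 : 0 <= xi p) by (apply xi_glb; intros x [Hx _]; auto).
  split; auto.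
  destruct (Rle_lt_dec p (F (xi p))) as [|Hlt]; auto. exfalso.
  destruct (F_rc (xi p) (p - F (xi p))) as [d [Hd Hnear]]; [lra|].
  assert (xi p + d <= xi p); [|lra].
  apply xi_glb. intros x [Hx HFx]. pose proof (xi_lb x (conj Hx HFx)) as Hxi_x.
  destruct (Rlt_le_dec x (xi p + d)) as [Hl|]; auto.
  specialize (Hnear x (conj Hxi_x Hl)). apply Rabs_def2 in Hnear. lra.
Qed.

Lemma F_lt_below_quantile (p z : R) : 0 <= p < 1 -> 0 <= z -> z < xi p -> F z < p.
Proof.
  intros Hp Hz Hzx. destruct (hxi p Hp) as [xi_lb _].
  destruct (Rlt_le_dec (F z) p) as [|Hle]; auto.
  assert (xi p <= z) by (apply xi_lb; split; lra). lra.
Qed.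

Lemma F_ge_above_quantile (p z : R) : 0 <= p < 1 -> xi p <= z -> p <= F z.
Proof.
  intros Hp Hz. destruct (quantile_spec p Hp) as [_ HF].
  destruct hF as [F_mono _]. pose proof (F_mono _ _ Hz). lra.
Qed.

Lemma quantile_le (p q : R) : 0 <= p <= q -> q < 1 -> xi p <= xi q.
Proof.
  intros Hpq Hq. destruct (quantile_spec q) as [Hq0 HFq]; [lra|].
  destruct (hxi p) as [xi_lb _]; [lra|]. apply xi_lb; split; lra.
Qed.

Lemma quantile_0 : xi 0 = 0.
Proof.
  destruct (quantile_spec 0) as [xi0_ge0 _]; [lra|]. destruct (hxi 0) as [xi_lb _]; [lra|].
  assert (xi 0 <= 0) by (apply xi_lb; split; [lra|]; pose proof (distribution_range 0); lra).
  lra.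
Qed.
End Quantile.

Lemma RInt_le_const (f : R -> R) (a b c : R) : a <= b -> ex_RInt f a b ->
  (forall x, a < x < b -> f x <= c) -> RInt f a b <= c * (b - a).
Proof.
  intros Hab Hf Hc. apply Rle_trans with (RInt (fun _ => c) a b).
  - apply RInt_le; auto. apply ex_RInt_const.
  - rewrite RInt_const. cbn. unfold mult; cbn. lra.
Qed.

Lemma RInt_ge_const (f : R -> R) (a b c : R) : a <= b -> ex_RInt f a b ->
  (forall x, a < x < b -> c <= f x) -> c * (b - a) <= RInt f a b.
Proof.
  intros Hab Hf Hc. apply Rle_trans with (RInt (fun _ => c) a b).
  - rewrite RInt_const. cbn. unfold mult; cbn. lra.
  - apply RInt_le; auto. apply ex_RInt_const.
Qed.

Lemma RInt_Chasles_R (f : R -> R) (a b c : R) :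
  ex_RInt f a b -> ex_RInt f b c -> RInt f a c = RInt f a b + RInt f b c.
Proof. intros. now rewrite <- (RInt_Chasles f a b c). Qed.

Section Tail.
Variables (h : R -> R) (l : R).
Hypothesis h_ge0 : forall z, 0 <= h z.
Hypothesis h_int : improper_integral_0_infty h l.

Lemma ex_RInt_improper (c d : R) : 0 <= c <= d -> ex_RInt h c d.
Proof.
  intros Hcd. destruct h_int as [I [HI _]]. destruct (HI d) as [pr _]; [lra|].
  apply (ex_RInt_Chasles_2 (V := R_CompleteNormedModule) h 0 c d); [lra|].
  exact (ex_RInt_Reals_1 _ _ _ pr).
Qed.

Lemma RInt_ge0_improper (c d : R) : 0 <= c <= d -> 0 <= RInt h c d.
Proof. intros Hcd. apply RInt_ge_0; [lra|now apply ex_RInt_improper|auto]. Qed.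

Lemma RInt_le_improper (c : R) : 0 <= c -> RInt h 0 c <= l.
Proof.
  intros Hc. destruct h_int as [I [HI Hlim]].
  destruct (Rle_lt_dec (RInt h 0 c) l) as [|Hgt]; auto. exfalso.
  destruct (Hlim (RInt h 0 c - l)) as [M HM]; [lra|].
  set (b := Rmax M c). specialize (HM b (Rmax_l _ _)).
  pose proof (Rmax_r M c) as Hcb. fold b in Hcb.
  destruct (HI b) as [pr Hpr]; [lra|]. rewrite <- Hpr, <- RInt_Reals in HM.
  rewrite (RInt_Chasles_R h 0 c b) in HM by (apply ex_RInt_improper; lra).
  pose proof (RInt_ge0_improper c b (conj Hc Hcb)).
  apply Rabs_def2 in HM. lra.
Qed.

Definition improper_tail (c : R) : R := l - RInt h 0 c.

Lemma RInt_le_improper_tail (c d : R) : 0 <= c <= d -> RInt h c d <= improper_tail c.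
Proof.
  intros Hcd. unfold improper_tail. pose proof (RInt_le_improper d ltac:(lra)) as Hd.
  rewrite (RInt_Chasles_R h 0 c d) in Hd by (apply ex_RInt_improper; lra). lra.
Qed.

Lemma improper_tail_ge0 (c : R) : 0 <= c -> 0 <= improper_tail c.
Proof.
  intros Hc. pose proof (RInt_le_improper_tail c c (conj Hc (Rle_refl c))) as Hcc.
  rewrite RInt_point in Hcc. exact Hcc.
Qed.

Lemma improper_tail_nonincreasing (c d : R) : 0 <= c <= d -> improper_tail d <= improper_tail c.
Proof.
  intros Hcd. unfold improper_tail.
  rewrite (RInt_Chasles_R h 0 c d) by (apply ex_RInt_improper; lra).
  pose proof (RInt_ge0_improper c d Hcd). lra.
Qed.

Lemma improper_tail_small (eps : R) : 0 < eps -> exists M, 0 <= M /\ improper_tail M < eps.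
Proof.
  intros Heps. destruct h_int as [I [HI Hlim]]. destruct (Hlim eps Heps) as [M HM].
  exists (Rmax M 0). split; [apply Rmax_r|].
  specialize (HM _ (Rmax_l M 0)). destruct (HI (Rmax M 0) (Rmax_r M 0)) as [pr Hpr].
  unfold improper_tail. rewrite RInt_Reals with (pr := pr), Hpr.
  apply Rabs_def2 in HM. lra.
Qed.

(* The mass, at least delta * c/2, of h on (c/2, c) lies beyond M. *)
Lemma improper_tail_lower_bound (delta c M : R) : 0 <= M -> 2 * M <= c ->
  (forall z, c / 2 < z < c -> delta <= h z) -> delta * c <= 2 * improper_tail M.
Proof.
  intros HM Hc Hdelta.
  pose proof (RInt_ge_const h (c / 2) c delta ltac:(lra)
                (ex_RInt_improper (c / 2) c ltac:(lra)) Hdelta).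
  pose proof (RInt_le_improper_tail (c / 2) c ltac:(lra)).
  pose proof (improper_tail_nonincreasing M (c / 2) ltac:(lra)). lra.
Qed.
End Tail.

Lemma improper_integral_lub (g : R -> R) (L : R) :
  (forall z, 0 <= g z) -> (forall b, 0 <= b -> Riemann_integrable g 0 b) ->
  is_lub (fun y => exists b, 0 <= b /\ y = RInt g 0 b) L ->
  improper_integral_0_infty g L.
Proof.
  intros g_ge0 g_int [L_ub L_least].
  assert (g_ex : forall b, 0 <= b -> ex_RInt g 0 b)
    by (intros b Hb; exact (ex_RInt_Reals_1 _ _ _ (g_int b Hb))).
  assert (RInt_mono : forall b b', 0 <= b <= b' -> RInt g 0 b <= RInt g 0 b').
  { intros b b' Hbb. rewrite (RInt_Chasles_R g 0 b b');
      [|apply g_ex; lra|apply (ex_RInt_Chasles_2 g 0); [lra|apply g_ex; lra]].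
    assert (0 <= RInt g b b'); [|lra].
    apply RInt_ge_0; [lra| |auto]. apply (ex_RInt_Chasles_2 g 0); [lra|apply g_ex; lra]. }
  exists (fun b => RInt g 0 b). split.
  - intros b Hb. exists (g_int b Hb). symmetry; apply RInt_Reals.
  - intros eps Heps.
    destruct (classic (exists b, 0 <= b /\ L - eps < RInt g 0 b)) as [[b [Hb Hlt]]|Hnone].
    + exists b. intros b' Hb'. pose proof (RInt_mono b b' ltac:(lra)).
      assert (RInt g 0 b' <= L) by (apply L_ub; exists b'; split; [lra|auto]).
      rewrite Rabs_left1; lra.
    + exfalso. assert (L <= L - eps); [|lra]. apply L_least. intros y [b [Hb ->]].
      apply Rnot_lt_le. intro Hlt. apply Hnone. now exists b.
Qed.

(* By Abel summation the middle term is the integral of the staircase equal to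
   [v (S i)] on [(x i, x (S i))]. *)
Lemma RInt_staircase_bracket (g : R -> R) (x v : nat -> R) (e : R) (n : nat) :
  (forall a b, ex_RInt g a b) -> x 0%nat = 0 ->
  (forall k, (k < n)%nat -> x k <= x (S k)) ->
  (forall k z, (k < n)%nat -> x k < z < x (S k) -> v (S k) <= g z <= v k) ->
  (forall k, (k < n)%nat -> v k - v (S k) <= e) ->
  forall k, (k <= n)%nat ->
    let S_k := sum_f_R0 (fun i => x i * (v i - v (S i))) k + x k * v (S k) in
    S_k <= RInt g 0 (x k) <= S_k + e * x k.
Proof.
  intros g_ex x0 x_mono g_cell v_step k Hk S_k. subst S_k.
  induction k as [|k IH]; cbn [sum_f_R0].
  - rewrite x0, RInt_point. cbn. lra.
  - specialize (IH ltac:(lia)).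
    rewrite (RInt_Chasles_R g 0 (x k) (x (S k))) by apply g_ex.
    pose proof (x_mono k ltac:(lia)). pose proof (v_step k ltac:(lia)).
    pose proof (RInt_ge_const g (x k) (x (S k)) (v (S k)) ltac:(lra) (g_ex _ _)
                  (fun z Hz => proj1 (g_cell k z ltac:(lia) Hz))).
    pose proof (RInt_le_const g (x k) (x (S k)) (v k) ltac:(lra) (g_ex _ _)
                  (fun z Hz => proj2 (g_cell k z ltac:(lia) Hz))).
    nra.
Qed.

Lemma quantile_sum_Abel (xi w : R -> R) (n : nat) :
  quantile_sum xi w (S n) =
  sum_f_R0 (fun i => xi (INR i / INR (S n)) *
    (w (1 - INR i / INR (S n)) - w (1 - INR (S i) / INR (S n)))) n.
Proof.
  unfold quantile_sum. replace (S n - 1)%nat with n by lia.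
  assert (HSn : INR (S n) <> 0) by (apply not_0_INR; lia).
  apply sum_eq. intros i Hi. do 3 f_equal.
  - rewrite minus_INR by lia. field. exact HSn.
  - replace (S n - i - 1)%nat with (S n - S i)%nat by lia.
    rewrite minus_INR by lia. field. exact HSn.
Qed.

Lemma INR_div_S_range (k n : nat) : (k <= n)%nat -> 0 <= INR k / INR (S n) < 1.
Proof.
  intros Hk. assert (HSn : 0 < INR (S n)) by (apply lt_0_INR; lia).
  split; [apply Rdiv_le_0_compat; [apply pos_INR|exact HSn]|].
  apply Rmult_lt_reg_r with (INR (S n)); [exact HSn|].
  unfold Rdiv. rewrite Rmult_assoc, Rinv_l, Rmult_1_l, Rmult_1_r by lra. apply lt_INR; lia.
Qed.

Definition distorted_survival (w F : R -> R) (z : R) : R := w (1 - F z).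

Section Estimates.
Variables (F xi w : R -> R) (alpha H gamma l : R).
Hypothesis hF : nonneg_distribution_function F.
Hypothesis hxi : forall p, 0 <= p < 1 -> is_glb (fun z => 0 <= z /\ F z >= p) (xi p).
Hypothesis hw_mono : forall x y, 0 <= x -> x <= y -> y <= 1 -> w x <= w y.
Hypothesis hw_range : forall x, 0 <= x <= 1 -> 0 <= w x <= 1.
Hypothesis hw0 : w 0 = 0.
Hypothesis hH : 0 <= H.
Hypothesis hw_holder : holder_01 w alpha H.
Hypothesis hgamma : 0 <= gamma <= alpha.
Hypothesis hint : improper_integral_0_infty (fun z => rpow (1 - F z) gamma) l.

Let g := distorted_survival w F.
Let h := fun z => rpow (1 - F z) gamma.
Let T := improper_tail h l.

Lemma w_le_holder (x : R) : 0 <= x <= 1 -> w x <= H * rpow x alpha.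
Proof.
  intros Hx. pose proof (hw_holder x 0 Hx ltac:(lra)) as Hhol.
  rewrite hw0, !Rminus_0_r, Rabs_right in Hhol by (pose proof (hw_range x Hx); lra).
  rewrite Rabs_right in Hhol by lra. exact Hhol.
Qed.

Lemma w_sub_le_holder (x y : R) : 0 <= y <= x -> x <= 1 -> w x - w y <= H * rpow (x - y) alpha.
Proof.
  intros Hxy Hx1. pose proof (hw_holder x y ltac:(lra) ltac:(lra)) as Hhol.
  rewrite (Rabs_right (x - y)) in Hhol by lra.
  apply Rle_trans with (2 := Hhol), Rle_abs.
Qed.

Lemma distorted_survival_nonincreasing (z z' : R) : z <= z' -> g z' <= g z.
Proof.
  intros Hz. unfold g, distorted_survival. destruct hF as [F_mono _].
  pose proof (F_mono z z' Hz).
  pose proof (distribution_range F hF z). pose proof (distribution_range F hF z').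
  apply hw_mono; lra.
Qed.

Lemma distorted_survival_ge0 (z : R) : 0 <= g z.
Proof.
  unfold g, distorted_survival. pose proof (distribution_range F hF z).
  apply hw_range; lra.
Qed.

Lemma ex_RInt_distorted_survival (a b : R) : ex_RInt g a b.
Proof.
  destruct (Rle_dec a b).
  - apply ex_RInt_Reals_1, Riemann_integrable_nonincreasing; auto.
    exact distorted_survival_nonincreasing.
  - apply ex_RInt_swap, ex_RInt_Reals_1, Riemann_integrable_nonincreasing; [|lra].
    exact distorted_survival_nonincreasing.
Qed.

(* As 1 - F z <= 1, this is where gamma <= alpha enters. *)
Lemma distorted_survival_le (z : R) : g z <= H * h z.
Proof.
  unfold g, h, distorted_survival. pose proof (distribution_range F hF z).
  apply Rle_trans with (H * rpow (1 - F z) alpha); [apply w_le_holder; lra|].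
  apply Rmult_le_compat_l; [lra|]. apply rpow_le_exponent; lra.
Qed.

Lemma RInt_distorted_survival_le (c d : R) : 0 <= c <= d -> RInt g c d <= H * RInt h c d.
Proof.
  intros Hcd.
  assert (h_ex : ex_RInt h c d) by (apply (ex_RInt_improper h l); auto).
  apply Rle_trans with (RInt (fun z => H * h z) c d).
  - apply RInt_le; [lra|apply ex_RInt_distorted_survival|exact (ex_RInt_scal h c d H h_ex)|].
    intros z _. apply distorted_survival_le.
  - right. exact (RInt_scal h c d H h_ex).
Qed.

Lemma distorted_survival_le_beyond_quantile (p z : R) : 0 <= p < 1 -> xi p <= z ->
  g z <= H * rpow (1 - p) alpha.
Proof.
  intros Hp Hz. unfold g, distorted_survival.
  pose proof (F_ge_above_quantile F xi hF hxi p z Hp Hz). pose proof (distribution_range F hF z).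
  apply Rle_trans with (H * rpow (1 - F z) alpha); [apply w_le_holder; lra|].
  apply Rmult_le_compat_l; [lra|]. apply rpow_le_base; lra.
Qed.

Lemma quantile_sum_bracket (n : nat) :
  let c := xi (INR n / INR (S n)) in
  quantile_sum xi w (S n) <= RInt g 0 c <=
  quantile_sum xi w (S n) + H * rpow (/ INR (S n)) alpha * c.
Proof.
  intros c. rewrite quantile_sum_Abel.
  assert (HSn : 0 < INR (S n)) by (apply lt_0_INR; lia).
  set (x := fun k => xi (INR k / INR (S n))).
  set (v := fun k => w (1 - INR k / INR (S n))).
  assert (v_Sn : v (S n) = 0) by (unfold v; rewrite Rdiv_diag, Rminus_diag by lra; exact hw0).
  assert (p_range := fun k Hk => INR_div_S_range k n Hk).
  assert (x_spec : forall k, (k <= n)%nat -> 0 <= x k /\ INR k / INR (S n) <= F (x k))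
    by (intros k Hk; apply (quantile_spec F xi hF hxi), p_range, Hk).
  assert (p_mono : forall k, INR k / INR (S n) <= INR (S k) / INR (S n)).
  { intros k. apply Rmult_le_compat_r; [left; apply Rinv_0_lt_compat; lra|apply le_INR; lia]. }
  assert (x0 : x 0%nat = 0).
  { unfold x. rewrite Rdiv_0_l. exact (quantile_0 F xi hF hxi). }
  assert (x_mono : forall k, (k < n)%nat -> x k <= x (S k)).
  { intros k Hk. apply (quantile_le F xi hF hxi); [|apply p_range; lia].
    pose proof (p_range k ltac:(lia)). pose proof (p_mono k). lra. }
  assert (g_cell : forall k z, (k < n)%nat -> x k < z < x (S k) -> v (S k) <= g z <= v k).
  { intros k z Hk Hz. destruct (x_spec k ltac:(lia)) as [xk_ge0 _].
    pose proof (F_lt_below_quantile F xi hxi _ z (p_range (S k) ltac:(lia)) ltac:(lra) (proj2 Hz)).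
    pose proof (F_ge_above_quantile F xi hF hxi _ z (p_range k ltac:(lia)) (Rlt_le _ _ (proj1 Hz))).
    pose proof (p_range k ltac:(lia)). pose proof (p_range (S k) ltac:(lia)).
    unfold g, v, distorted_survival. split; apply hw_mono; lra. }
  assert (v_step : forall k, (k < n)%nat -> v k - v (S k) <= H * rpow (/ INR (S n)) alpha).
  { intros k Hk. unfold v.
    replace (/ INR (S n)) with (1 - INR k / INR (S n) - (1 - INR (S k) / INR (S n)))
      by (rewrite (S_INR k); field; lra).
    pose proof (p_range k ltac:(lia)). pose proof (p_range (S k) ltac:(lia)).
    pose proof (p_mono k). apply w_sub_le_holder; lra. }
  pose proof (RInt_staircase_bracket g x v _ n ex_RInt_distorted_survival x0 x_mono g_cell v_step
                n (Nat.le_refl n)) as Hbracket.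
  cbv zeta in Hbracket. rewrite v_Sn, Rmult_0_r, Rplus_0_r in Hbracket.
  unfold x, v in Hbracket. fold c in Hbracket. lra.
Qed.

Lemma RInt_distorted_survival_split (c e M b : R) : 0 <= c -> 0 <= M -> 0 <= e -> 0 <= b ->
  (forall z, c <= z -> g z <= e) -> RInt g 0 b <= RInt g 0 c + (e * M + H * T M).
Proof.
  intros Hc HM He Hb g_le.
  assert (g_ex := ex_RInt_distorted_survival).
  assert (g_ge0 := distorted_survival_ge0).
  assert (T_ge0 : 0 <= T M) by exact (improper_tail_ge0 h l (fun z => rpow_ge0 _ _) hint M HM).
  destruct (Rle_dec b c).
  - rewrite (RInt_Chasles_R g 0 b c) by apply g_ex.
    pose proof (RInt_ge_0 g b c ltac:(lra) (g_ex _ _) (fun z _ => g_ge0 z)). nra.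
  - rewrite (RInt_Chasles_R g 0 c b) by apply g_ex. apply Rplus_le_compat_l.
    set (y := Rmax c M). assert (Hcy : c <= y) by apply Rmax_l.
    assert (HMy : M <= y) by apply Rmax_r.
    assert (Hyc : y - c <= M) by (unfold y, Rmax; destruct (Rle_dec c M); lra).
    assert (near : forall d, c <= d <= y -> RInt g c d <= e * M).
    { intros d Hd. apply Rle_trans with (e * (d - c)); [|nra].
      apply RInt_le_const; [lra|apply g_ex|]. intros z Hz. apply g_le; lra. }
    destruct (Rle_dec b y); [pose proof (near b ltac:(lra)); nra|].
    rewrite (RInt_Chasles_R g c y b) by apply g_ex. apply Rplus_le_compat; [apply near; lra|].
    apply Rle_trans with (H * RInt h y b); [apply RInt_distorted_survival_le; lra|].
    apply Rmult_le_compat_l; [lra|].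
    apply Rle_trans with (T y).
    + apply (RInt_le_improper_tail h l (fun z => rpow_ge0 _ _) hint); lra.
    + apply (improper_tail_nonincreasing h l (fun z => rpow_ge0 _ _) hint); lra.
Qed.

Variable L : R.
Hypothesis L_lub : is_lub (fun y => exists b, 0 <= b /\ y = RInt g 0 b) L.

(* The mass of h on (c/2, c) controls the quantile c, since 1 - F > 1/N below it. *)
Lemma quantile_sum_error (n : nat) (M : R) : 0 <= M ->
  0 <= L - quantile_sum xi w (S n) <= 3 * H * (M * rpow (/ INR (S n)) alpha + T M).
Proof.
  intros HM.
  assert (HSn : 0 < INR (S n)) by (apply lt_0_INR; lia).
  set (p := INR n / INR (S n)). assert (Hp : 0 <= p < 1) by apply INR_div_S_range, le_n.
  assert (Hp1 : 1 - p = / INR (S n)) by (unfold p; rewrite S_INR in *; field; lra).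
  set (c := xi p). destruct (quantile_spec F xi hF hxi p Hp) as [Hc _].
  set (r := rpow (/ INR (S n)) alpha).
  assert (Hr : 0 <= H * r) by (apply Rmult_le_pos; [lra|apply rpow_ge0]).
  pose proof (quantile_sum_bracket n) as Hbracket. fold p c r in Hbracket.
  assert (T_ge0 : 0 <= T M) by exact (improper_tail_ge0 h l (fun z => rpow_ge0 _ _) hint M HM).
  destruct L_lub as [L_ub L_least].
  assert (HcL : RInt g 0 c <= L) by (apply L_ub; now exists c).
  assert (HLc : L <= RInt g 0 c + (H * r * M + H * T M)).
  { apply L_least. intros y [b [Hb ->]].
    apply RInt_distorted_survival_split; auto.
    intros z Hz. unfold r. rewrite <- Hp1.
    exact (distorted_survival_le_beyond_quantile p z Hp Hz). }
  assert (Hmass : H * r * c <= 2 * H * T M + 2 * M * (H * r)).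
  { destruct (Rle_dec c (2 * M)); [nra|].
    set (delta := rpow (/ INR (S n)) gamma).
    assert (Hdelta : delta * c <= 2 * T M).
    { apply (improper_tail_lower_bound h l (fun z => rpow_ge0 _ _) hint); [lra|lra|].
      intros z Hz. unfold delta, h. rewrite <- Hp1. apply rpow_le_base; [|lra].
      pose proof (F_lt_below_quantile F xi hxi p z Hp ltac:(lra) (proj2 Hz)). lra. }
    assert (Hrd : r <= delta).
    { unfold r, delta. rewrite <- Hp1. apply rpow_le_exponent; lra. }
    assert (r * c <= 2 * T M)
      by (apply Rle_trans with (delta * c); [apply Rmult_le_compat_r|]; lra).
    assert (H * (r * c) <= H * (2 * T M)) by (apply Rmult_le_compat_l; lra).
    assert (0 <= M * (H * r)) by (apply Rmult_le_pos; lra).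
    lra. }
  nra.
Qed.
End Estimates.

Lemma Un_cv_of_error_bound (u r : nat -> R) (t : R -> R) (L K : R) : 0 < K -> Un_cv r 0 ->
  (forall e, 0 < e -> exists M, 0 <= M /\ t M < e) ->
  (forall M n, 0 <= M -> Rabs (u n - L) <= K * (M * r n + t M)) -> Un_cv u L.
Proof.
  intros HK r_cv t_small Hbound eps Heps.
  destruct (t_small (eps / (2 * K))) as [M [HM HtM]]; [apply Rdiv_lt_0_compat; lra|].
  set (q := eps / (2 * K * (M + 1))).
  destruct (r_cv q) as [n0 Hn0]; [apply Rdiv_lt_0_compat; nra|].
  exists n0. intros n Hn. specialize (Hn0 n Hn). unfold R_dist in *.
  rewrite Rminus_0_r in Hn0. apply Rabs_def2 in Hn0.
  apply Rle_lt_trans with (1 := Hbound M n HM).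
  assert (Hr : M * r n < eps / (2 * K)).
  { replace (eps / (2 * K)) with ((M + 1) * q) by (unfold q; field; lra). nra. }
  apply Rlt_le_trans with (K * (eps / (2 * K) + eps / (2 * K))); [apply Rmult_lt_compat_l; lra|].
  right. field. lra.
Qed.

Theorem mainTheorem2
  (F : R -> R) (xi : R -> R) (w : R -> R) (alpha H gamma : R)
  (hF : nonneg_distribution_function F)
  (hxi : forall p, 0 <= p < 1 -> is_glb (fun z => 0 <= z /\ F z >= p) (xi p))
  (hw_cont : forall x, 0 <= x <= 1 -> continuity_pt w x)
  (hw_mono : forall x y, 0 <= x -> x <= y -> y <= 1 -> w x <= w y)
  (hw_range : forall x, 0 <= x <= 1 -> 0 <= w x <= 1)
  (hw0 : w 0 = 0) (hw1 : w 1 = 1)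
  (halpha : 0 < alpha <= 1) (hH : 0 < H)
  (hw_holder : holder_01 w alpha H)
  (hgamma : 0 < gamma <= alpha)
  (hint : exists l, improper_integral_0_infty (fun z => rpow (1 - F z) gamma) l) :
  exists L,
    improper_integral_0_infty (fun z => w (1 - F z)) L /\
    Un_cv (fun n => quantile_sum xi w (S n)) L.
Proof.
  destruct hint as [l hint].
  set (h := fun z => rpow (1 - F z) gamma).
  assert (h_ge0 : forall z, 0 <= h z) by (intros; apply rpow_ge0).
  set (E := fun y : R => exists b, 0 <= b /\ y = RInt (distorted_survival w F) 0 b).
  assert (E_bound : bound E).
  { exists (H * l). intros y [b [Hb ->]].
    apply Rle_trans with (H * RInt h 0 b);
      [apply (RInt_distorted_survival_le F w alpha H gamma l); auto; lra|].
    apply Rmult_le_compat_l; [lra|]. exact (RInt_le_improper h l h_ge0 hint b Hb). }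
  destruct (completeness E E_bound) as [L L_lub].
  { exists 0, 0. split; [lra|now rewrite RInt_point]. }
  exists L. split.
  - apply improper_integral_lub; [|intros b Hb|exact L_lub].
    + apply (distorted_survival_ge0 F w hF hw_range).
    + apply Riemann_integrable_nonincreasing; [|exact Hb].
      exact (distorted_survival_nonincreasing F w hF hw_mono).
  - apply (Un_cv_of_error_bound _ (fun n => rpow (/ INR (S n)) alpha) (improper_tail h l) L
             (3 * H)); [lra|now apply rpow_inv_INR_cv0|exact (improper_tail_small h l hint)|].
    intros M n HM.
    destruct (quantile_sum_error F xi w alpha H gamma l hF hxi hw_mono hw_range hw0
                ltac:(lra) hw_holder ltac:(lra) hint L L_lub n M HM) as [Hlo Hhi].
    unfold h. rewrite Rabs_minus_sym, Rabs_right; lra.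
Qed.
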